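(* Let $\lambda$ be a nonzero real number and $n$ a positive integer. Then, as polynomials in $x$, $$\phi_{n+1,\lambda}(x)=x\phi_{n,\lambda}(x)+\Big(x\frac{d}{dx}-n\lambda\Big)\phi_{n,\lambda}(x)=x\sum_{k=0}^{n}\binom{n}{k}(1-\lambda)_{n-k,\lambda}\,\phi_{k,\lambda}(x).$$
   Context: For real $y$ and integer $k\ge0$: $(y)_{0,\lambda}=1$, $(y)_{k,\lambda}=y(y-\lambda)\cdots(y-(k-1)\lambda)$. The degenerate exponential is $e_\lambda(t)=\sum_{k\ge0}(1)_{k,\lambda}t^k/k!=(1+\lambda t)^{1/\lambda}$. The degenerate Bell polynomials $\phi_{n,\lambda}(x)$ are defined by $e^{x(e_\lambda(t)-1)}=\sum_{n\ge0}\phi_{n,\lambda}(x)\frac{t^n}{n!}$. *)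

From HB Require Import structures.
From mathcomp Require Import all_boot all_order all_algebra.
From mathcomp Require Import reals.
Set Implicit Arguments. Unset Strict Implicit. Unset Printing Implicit Defensive.
Import Order.TTheory GRing.Theory Num.Theory.
Local Open Scope ring_scope.

Definition dfall (R : ringType) (y : R) (k : nat) (lam : R) : R :=
  \prod_(i < k) (y - i%:R * lam).

(* Truncation to degree <= n (in t) of e_lambda(t) - 1 = sum_{j>=1} (1)_{j,lambda} t^j / j!. *)
Definition elam_trunc (R : fieldType) (lam : R) (n : nat) : {poly R} :=
  \sum_(1 <= j < n.+1) ((j`!%:R)^-1 * dfall 1 j lam) *: 'X^j.

(* Degenerate Bell polynomial phi_{n,lambda}(x), as a polynomial in x:
   n! times the coefficient of t^n in the formal power series
   exp(x (e_lambda(t) - 1)) = sum_k x^k (e_lambda(t)-1)^k / k!.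
   Since e_lambda(t) - 1 has zero constant term, only k <= n contribute and
   the coefficient of t^n in (e_lambda(t)-1)^k equals that of (elam_trunc n)^k. *)
Definition dbell (R : fieldType) (n : nat) (lam : R) : {poly R} :=
  n`!%:R *: \sum_(k < n.+1) ((k`!%:R)^-1 * ((elam_trunc lam n) ^+ k)`_n) *: 'X^k.

(* Write F(t) = e_lam(t) - 1, so that phi_n(x) = sum_k n!/k! [t^n] F(t)^k x^k.
   The power series F satisfies (1 + lam t) F' = 1 + F and F'(t) = e_lam(t)^(1-lam),
   i.e. F' = sum_m (1-lam)_{m,lam} t^m/m!.  Differentiating F^(k+1) therefore gives
   (1 + lam t) (F^(k+1))' = (k+1) (1 + F) F^k   and   (F^(k+1))' = (k+1) F^k F',
   and comparing the coefficients of t^n yields the two identities, coefficientwise in x.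
   All series are replaced by the truncations [elam_trunc lam N]: low-order
   coefficients of their powers do not depend on N. *)

From HB Require Import structures.
From mathcomp Require Import all_boot all_order all_algebra.
From mathcomp Require Import reals.
From mathcomp Require Import ring zify.
Set Implicit Arguments.
Unset Strict Implicit.
Unset Printing Implicit Defensive.
Import Order.TTheory GRing.Theory Num.Theory.
Local Open Scope ring_scope.

Section PolyCoefficients.
Variable R : nzRingType.
Implicit Types p q : {poly R}.

Lemma take_polyMl m p q : take_poly m (take_poly m p * q) = take_poly m (p * q).
Proof.
apply/polyP => i; rewrite !coef_take_poly; case: ifP => // lt_im.
rewrite !coefM; apply: eq_bigr => -[j /= le_ji] _.
by rewrite coef_take_poly (leq_ltn_trans _ lt_im).
Qed.

Lemma take_polyMr m p q : take_poly m (p * take_poly m q) = take_poly m (p * q).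
Proof.
apply/polyP => i; rewrite !coef_take_poly; case: ifP => // lt_im.
rewrite !coefM; apply: eq_bigr => -[j /= le_ji] _.
by rewrite coef_take_poly (leq_ltn_trans (leq_subr _ _) lt_im).
Qed.

Lemma take_poly_exp m p k : take_poly m (take_poly m p ^+ k) = take_poly m (p ^+ k).
Proof.
elim: k => [|k IHk]; first by rewrite !expr0.
by rewrite !exprS take_polyMl -take_polyMr IHk take_polyMr.
Qed.

Lemma coef_exp_lt p k i : p`_0 = 0 -> (i < k)%N -> (p ^+ k)`_i = 0.
Proof.
move=> p0; elim: k i => [|k IHk] i // lt_ik.
rewrite exprS coefM big1 // => -[[|j] /= lt_ji] _; first by rewrite p0 mul0r.
by rewrite IHk ?mulr0 //; lia.
Qed.

Lemma coefX_deriv p i : ('X * p^`())`_i = p`_i *+ i.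
Proof. by rewrite coefXM; case: i => [|i] //=; rewrite coef_deriv. Qed.

End PolyCoefficients.

Section DegenerateFalling.
Variable R : nzRingType.
Implicit Types y lam : R.

Lemma dfallSl y lam m : dfall y m.+1 lam = y * dfall (y - lam) m lam.
Proof.
rewrite /dfall big_ord_recl mul0r subr0; congr (_ * _).
by apply: eq_bigr => i _; rewrite /bump /= natrD mulrDl mul1r opprD addrA.
Qed.

Lemma dfallSr y lam m : dfall y m.+1 lam = dfall y m lam * (y - m%:R * lam).
Proof. by rewrite /dfall big_ord_recr. Qed.

End DegenerateFalling.

Section Factorials.
Variable R : numFieldType.

Lemma natr_fact_neq0 n : (n`!%:R : R) != 0.
Proof. by rewrite pnatr_eq0 -lt0n fact_gt0. Qed.

Lemma natr_bin_fact n k : (k <= n)%N ->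
  ('C(n, k)%:R : R) = n`!%:R / (k`!%:R * (n - k)`!%:R).
Proof.
by move=> le_kn; rewrite -(bin_fact le_kn) !natrM mulfK // mulf_neq0 ?natr_fact_neq0.
Qed.

End Factorials.

Section DegenerateBell.
Variables (R : numFieldType) (lam : R).

Definition dexp_coef (j : nat) : R := (j`!%:R)^-1 * dfall 1 j lam.

Local Notation E := (elam_trunc lam).

Lemma coef_elam_trunc N i :
  (E N)`_i = if (0 < i <= N)%N then dexp_coef i else 0.
Proof.
rewrite /elam_trunc coef_sum.
under eq_bigr => j _ do rewrite coefZ coefXn.
case: ifPn => [i_in | i_out].
  rewrite (bigD1_seq i) ?mem_index_iota ?iota_uniq //= eqxx mulr1 big1 ?addr0 //.
  by move=> j; rewrite eq_sym => /negbTE ->; rewrite mulr0.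
rewrite big_nat big1 // => j j_in; case: eqP => [eq_ij|]; last by rewrite mulr0.
by move: j_in i_out; rewrite eq_ij ltnS => ->.
Qed.

Lemma take_elam_trunc N M :
  (N <= M)%N -> take_poly N.+1 (E M) = E N.
Proof.
move=> le_NM; apply/polyP => i; rewrite coef_take_poly !coef_elam_trunc ltnS.
by case: (leqP i N) => [le_iN | _]; rewrite ?(leq_trans le_iN) ?andbF.
Qed.

Lemma coef_elam_trunc_exp_stable N M k n : (n <= N <= M)%N ->
  (E M ^+ k)`_n = (E N ^+ k)`_n.
Proof.
case/andP=> le_nN le_NM.
have coef_take p : (take_poly N.+1 p)`_n = p`_n by rewrite coef_take_poly ltnS le_nN.
by rewrite -coef_take -take_poly_exp take_elam_trunc // take_poly_exp coef_take.
Qed.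

Lemma coef_dbell N n k : (n <= N)%N ->
  (dbell n lam)`_k = n`!%:R / k`!%:R * (E N ^+ k)`_n.
Proof.
move=> le_nN; rewrite (@coef_elam_trunc_exp_stable n N) ?leqnn //.
rewrite /dbell -(poly_def _ (fun k => k`!%:R^-1 * (E n ^+ k)`_n)).
rewrite coefZ coef_poly; case: ltnP => [_ | lt_nk]; first by rewrite mulrA.
by rewrite coef_exp_lt ?mulr0 // coef_elam_trunc.
Qed.

Lemma dexp_coef0 : dexp_coef 0 = 1.
Proof. by rewrite /dexp_coef /dfall big_ord0 invr1 mulr1. Qed.

Lemma dexp_coefS m : m.+1%:R * dexp_coef m.+1 = (1 - m%:R * lam) * dexp_coef m.
Proof.
rewrite /dexp_coef dfallSr factS natrM.
by field; rewrite natr_fact_neq0 nat1r pnatr_eq0.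
Qed.

Lemma coef_deriv_elam_trunc N m : (m < N)%N ->
  (E N)^`()`_m = dfall (1 - lam) m lam / m`!%:R.
Proof.
move=> lt_mN; rewrite coef_deriv coef_elam_trunc lt_mN /= -mulr_natl.
rewrite /dexp_coef dfallSl mul1r factS natrM.
by field; rewrite natr_fact_neq0 nat1r pnatr_eq0.
Qed.

Lemma take_elam_trunc_ode N :
  take_poly N ((1 + lam *: 'X) * (E N)^`()) = take_poly N (1 + E N).
Proof.
apply/polyP => m; rewrite !coef_take_poly; case: ifP => // lt_mN.
rewrite mulrDl mul1r -scalerAl !coefD coefZ coefX_deriv coef_deriv coef1.
rewrite !coef_elam_trunc lt_mN (ltnW lt_mN) /=.
rewrite -[dexp_coef _ *+ _]mulr_natl dexp_coefS.
case: m lt_mN => [|m] _ /=; last by rewrite add0r; ring.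
by rewrite dexp_coef0 mulr0n mulr0 !addr0 mul0r subr0 mulr1.
Qed.

Lemma coef_elam_trunc_expS_ode N n k : (n < N)%N ->
  (E N ^+ k.+1)`_n.+1 *+ n.+1 + lam * ((E N ^+ k.+1)`_n *+ n) =
  ((E N ^+ k)`_n + (E N ^+ k.+1)`_n) *+ k.+1.
Proof.
move=> lt_nN.
have ode_k : take_poly N ((1 + lam *: 'X) * (E N)^`() * E N ^+ k) =
             take_poly N ((1 + E N) * E N ^+ k).
  by rewrite -take_polyMl take_elam_trunc_ode take_polyMl.
have expand : ((1 + lam *: 'X) * (E N ^+ k.+1)^`())`_n =
    (E N ^+ k.+1)`_n.+1 *+ n.+1 + lam * ((E N ^+ k.+1)`_n *+ n).
  by rewrite mulrDl mul1r -scalerAl coefD coefZ coefX_deriv coef_deriv.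
rewrite -expand deriv_exp mulrnAr mulrA coefMn; congr (_ *+ _).
have := congr1 (coefp n) ode_k; rewrite /= !coef_take_poly lt_nN => ->.
by rewrite mulrDl mul1r -exprS coefD.
Qed.

Lemma coef_elam_trunc_expS_conv N n k : (n < N)%N ->
  (E N ^+ k.+1)`_n.+1 *+ n.+1 =
  (\sum_(j < n.+1) (E N ^+ k)`_j * (dfall (1 - lam) (n - j) lam / (n - j)`!%:R)) *+ k.+1.
Proof.
move=> lt_nN; rewrite -coef_deriv deriv_exp coefMn mulrC coefM; congr (_ *+ _).
apply: eq_bigr => -[j /= _] _; rewrite coef_deriv_elam_trunc //.
exact: leq_ltn_trans (leq_subr j n) lt_nN.
Qed.

Lemma dbellS_deriv n :
  dbell n.+1 lam = 'X * dbell n lam + ('X * (dbell n lam)^`() - (n%:R * lam) *: dbell n lam).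
Proof.
have le_n_Sn := leqnSn n.
apply/polyP => -[|j]; rewrite coefD coefB (coefZ (n%:R * lam)) coefX_deriv coefXM /=.
  rewrite (coef_dbell _ (leqnn n.+1)) !(coef_dbell _ le_n_Sn) !expr0 !coef1.
  rewrite /= mulr0 mulr0n add0r sub0r.
  by case: n {le_n_Sn} => [|n]; rewrite ?mul0r ?mulr0 oppr0.
rewrite (coef_dbell _ (leqnn n.+1)) !(coef_dbell _ le_n_Sn).
have := coef_elam_trunc_expS_ode j (ltnSn n).
move: (E n.+1 ^+ j.+1)`_n.+1 (E n.+1 ^+ j)`_n (E n.+1 ^+ j.+1)`_n => a b c ode_j.
have -> : a = ((b + c) *+ j.+1 - lam * (c *+ n)) / n.+1%:R.
  by rewrite -ode_j addrK -(mulr_natr a) mulfK ?pnatr_eq0.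
rewrite !factS !natrM.
by field; rewrite natr_fact_neq0 !nat1r !pnatr_eq0.
Qed.

Lemma dbellS_binomial n :
  dbell n.+1 lam =
  'X * \sum_(k < n.+1) ('C(n, k)%:R * dfall (1 - lam) (n - k) lam) *: dbell k lam.
Proof.
apply/polyP => -[|j]; rewrite coefXM (coef_dbell _ (leqnn n.+1)) /=.
  by rewrite expr0 coef1 mulr0.
rewrite coef_sum.
under eq_bigr => k _ do rewrite coefZ (coef_dbell _ (ltnW (ltn_ord k))).
have := coef_elam_trunc_expS_conv j (ltnSn n).
move: (E n.+1 ^+ j.+1)`_n.+1 => a conv.
have -> : a = (\sum_(k < n.+1)
                 (E n.+1 ^+ j)`_k * (dfall (1 - lam) (n - k) lam / (n - k)`!%:R))
               *+ j.+1 / n.+1%:R.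
  by rewrite -conv -(mulr_natr a) mulfK ?pnatr_eq0.
rewrite -[_ *+ j.+1]mulr_natr !mulr_suml mulr_sumr; apply: eq_bigr => -[k /= lt_kSn] _.
rewrite natr_bin_fact // !factS !natrM.
by field; rewrite !natr_fact_neq0 !nat1r !pnatr_eq0.
Qed.

End DegenerateBell.

Theorem theorem11 (R : realType) (lam : R) (n : nat) :
  lam != 0 -> (0 < n)%N ->
  dbell n.+1 lam = 'X * dbell n lam + ('X * (dbell n lam)^`() - (n%:R * lam) *: dbell n lam)
  /\ dbell n.+1 lam =
     'X * \sum_(k < n.+1) ('C(n, k)%:R * dfall (1 - lam) (n - k) lam) *: dbell k lam.
Proof.
(* Both identities hold for every [lam] and every [n]. *)
by move=> _ _; split; [exact: dbellS_deriv | exact: dbellS_binomial].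
Qed.
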